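(* Let $n,m\in\mathbb{N}_0$. Then $L_n^{(m)}\big(3+2\,\mathrm{Re}\sqrt[3]{3(1-i\sqrt2)}\big)=0$ if and only if $n=3$ and $m=0$.
   Context: Generalized Laguerre polynomials: $L_n^{(\alpha)}(x)=\sum_{j=0}^n(-1)^j\binom{n+\alpha}{n-j}\frac{x^j}{j!}$. Here $\sqrt[3]{\cdot}$ denotes the principal cube root, so that $3+2\,\mathrm{Re}\sqrt[3]{3(1-i\sqrt2)}$ is the largest root of $L_3^{(0)}(x)=\frac16(-x^3+9x^2-18x+6)$. *)

From Stdlib Require Import Reals.
From Coquelicot Require Import Coquelicot.
Open Scope R_scope.

Definition laguerre (n m : nat) (x : R) : R :=
  sum_f_R0 (fun j => (-1) ^ j * Binomial.C (n + m) (n - j) * x ^ j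
                     / INR (Factorial.fact j)) n.

Definition Carg (z : C) : R :=
  if Rlt_dec (Im z) 0 then - acos (Re z / Cmod z) else acos (Re z / Cmod z).

Definition cbrt (z : C) : C :=
  if Req_EM_T (Cmod z) 0 then (0, 0)
  else (Rpower (Cmod z) (1/3) * cos (Carg z / 3),
        Rpower (Cmod z) (1/3) * sin (Carg z / 3)).

Definition x0 : R := 3 + 2 * Re (cbrt (3, - (3 * sqrt 2))).

(* x0 is a root of p = x^3 - 9 x^2 + 18 x - 6 = -6 L_3^(0), which is irreducible over Q
   (Eisenstein at 3).  Hence L_n^(m)(x0) = 0 iff p divides the integer polynomial
   n! L_n^(m) = sum_j (-1)^j C(n,j) (m+j+1)...(m+n) x^j, i.e. iff its remainder modulo p
   vanishes.  With N = m + n, every coefficient but the top three is divisible by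
   (N-2)(N-1)N, which for N >= 5 has a divisor d > 1 prime to 6.  Since p(0) = -6, x is
   invertible in (Z/d)[x]/(p), so p | x^(n-2) (c_(n-2) + c_(n-1) x + c_n x^2) mod d forces
   d | c_n = +-1, which is absurd.  Degrees n <= 2 are excluded by irreducibility, and the
   three pairs with n >= 3, N < 5 are checked by computation. *)

From Stdlib Require Import Reals ZArith Znumtheory Lia Lra List.
Import ListNotations.
From Coquelicot Require Import Coquelicot.
Open Scope R_scope.

Lemma cos_3a (t : R) : cos (3 * t) = 4 * cos t ^ 3 - 3 * cos t.
Proof.
  replace (3 * t) with (2 * t + t) by ring.
  rewrite cos_plus, cos_2a_cos, sin_2a.
  pose proof (sin2_cos2 t) as H; unfold Rsqr in H.
  replace ((2 * cos t * cos t - 1) * cos t - 2 * sin t * cos t * sin t)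
    with ((2 * cos t * cos t - 1) * cos t - 2 * cos t * (sin t * sin t)) by ring.
  replace (sin t * sin t) with (1 - cos t * cos t) by lra. ring.
Qed.

Lemma Rpower_cube_third (a : R) : 0 < a -> Rpower (a ^ 3) (1 / 3) = a.
Proof.
  intro Ha. rewrite <- (Rpower_pow 3 a Ha), Rpower_mult.
  replace (INR 3 * (1 / 3)) with 1 by (simpl; field). apply Rpower_1, Ha.
Qed.

Lemma Cmod_x0_radicand : Cmod (3, - (3 * sqrt 2)) = 3 * sqrt 3.
Proof.
  unfold Cmod; cbn [fst snd].
  pose proof (sqrt_sqrt 2 ltac:(lra)). pose proof (sqrt_sqrt 3 ltac:(lra)).
  pose proof (sqrt_pos 3).
  rewrite <- (sqrt_pow2 (3 * sqrt 3)) by lra. f_equal. nra.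
Qed.

Lemma x0_trig : x0 = 3 + 2 * sqrt 3 * cos (acos (/ sqrt 3) / 3).
Proof.
  pose proof (sqrt_lt_R0 3 ltac:(lra)) as H3.
  assert (H32 : 0 < 3 * sqrt 2) by (pose proof (sqrt_lt_R0 2 ltac:(lra)); lra).
  unfold x0, cbrt, Carg; rewrite Cmod_x0_radicand; cbn [Re Im fst snd].
  destruct (Req_EM_T (3 * sqrt 3) 0); [lra|].
  destruct (Rlt_dec (- (3 * sqrt 2)) 0); [|lra].
  assert (Hcube : sqrt 3 ^ 3 = 3 * sqrt 3) by (pose proof (sqrt_sqrt 3 ltac:(lra)); simpl; nra).
  rewrite <- Hcube, Rpower_cube_third by lra.
  replace (3 / sqrt 3 ^ 3) with (/ sqrt 3) by (rewrite Hcube; field; lra).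
  cbn [Re fst]. replace (- acos (/ sqrt 3) / 3) with (- (acos (/ sqrt 3) / 3)) by field.
  rewrite cos_neg. ring.
Qed.

Lemma x0_root : x0 ^ 3 - 9 * x0 ^ 2 + 18 * x0 - 6 = 0.
Proof.
  pose proof (sqrt_sqrt 3 ltac:(lra)) as Hss.
  assert (H1 : 1 < sqrt 3) by (rewrite <- sqrt_1; apply sqrt_lt_1; lra).
  assert (Hinv : 0 < / sqrt 3 < 1).
  { split; [apply Rinv_0_lt_compat | rewrite <- Rinv_1; apply Rinv_lt_contravar]; lra. }
  set (c := cos (acos (/ sqrt 3) / 3)).
  assert (Hc : sqrt 3 * (4 * c ^ 3 - 3 * c) = 1).
  { unfold c. rewrite <- cos_3a.
    replace (3 * (acos (/ sqrt 3) / 3)) with (acos (/ sqrt 3)) by field.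
    rewrite cos_acos by lra. field. lra. }
  rewrite x0_trig; fold c.
  replace ((3 + 2 * sqrt 3 * c) ^ 3 - 9 * (3 + 2 * sqrt 3 * c) ^ 2
           + 18 * (3 + 2 * sqrt 3 * c) - 6)
    with (8 * sqrt 3 * c ^ 3 * (sqrt 3 * sqrt 3 - 3)
          + 6 * (sqrt 3 * (4 * c ^ 3 - 3 * c) - 1)) by ring.
  rewrite Hss, Hc. ring.
Qed.

Open Scope Z_scope.

(* [cubic_form s t = t^3 p(s/t)] *)
Definition cubic_form (s t : Z) : Z := s * s * s - 9 * s * s * t + 18 * s * t * t - 6 * t * t * t.

Lemma prime3_divide_cube (s : Z) : (3 | s * s * s) -> (3 | s).
Proof.
  intro H. destruct (prime_mult 3 prime_3 _ _ H) as [H2 | H2]; [|exact H2].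
  destruct (prime_mult 3 prime_3 _ _ H2); assumption.
Qed.

(* Eisenstein at 3: a zero forces 3 | s and then 3 | t, and dividing by 3 gives a smaller zero. *)
Lemma cubic_form_neq0 (s t : Z) : t <> 0 -> cubic_form s t <> 0.
Proof.
  remember (Z.abs_nat t) as k eqn:Hk. revert s t Hk.
  induction k as [k IH] using lt_wf_ind. intros s t Hk Ht H. unfold cubic_form in H.
  assert (Hs : (3 | s)).
  { apply prime3_divide_cube. exists (3 * s * s * t - 6 * s * t * t + 2 * t * t * t). lia. }
  destruct Hs as [s' ->].
  assert (Htt : (3 | t)).
  { apply prime3_divide_cube, (Z.gauss _ 2); [|reflexivity].
    exists (3 * s' * s' * s' - 9 * s' * s' * t + 6 * s' * t * t). lia. }
  destruct Htt as [t' ->].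
  apply (IH (Z.abs_nat t') ltac:(lia) s' t' eq_refl ltac:(lia)).
  assert (H27 : 27 * cubic_form s' t' = 0) by (rewrite <- H; unfold cubic_form; ring).
  lia.
Qed.

Lemma x0_irrational (s t : Z) : t <> 0 -> (IZR t * x0 <> IZR s)%R.
Proof.
  intros Ht H. apply (cubic_form_neq0 s t Ht), eq_IZR. unfold cubic_form.
  repeat rewrite ?plus_IZR, ?minus_IZR, ?mult_IZR. rewrite <- H.
  replace 0%R with (IZR t * IZR t * IZR t * (x0 ^ 3 - 9 * x0 ^ 2 + 18 * x0 - 6))%R
    by (rewrite x0_root; ring).
  ring.
Qed.

Lemma x0_Z_independent (a b c : Z) :
  (IZR a + IZR b * x0 + IZR c * x0 ^ 2 = 0)%R -> a = 0 /\ b = 0 /\ c = 0.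
Proof.
  intro H. destruct (Z.eq_dec c 0) as [-> | Hc].
  - destruct (Z.eq_dec b 0) as [-> | Hb].
    + split; [apply eq_IZR; lra | auto].
    + exfalso. apply (x0_irrational (- a) b Hb). rewrite opp_IZR. lra.
  - exfalso.
    (* u + v x is the remainder of c^2 p divided by a + b x + c x^2. *)
    set (u := a * b + 9 * a * c - 6 * c * c).
    set (v := b * b - a * c + 9 * b * c + 18 * c * c).
    assert (Huv : (IZR u + IZR v * x0 = 0)%R).
    { replace (IZR u + IZR v * x0)%R with
        (IZR c * IZR c * (x0 ^ 3 - 9 * x0 ^ 2 + 18 * x0 - 6)
         - (IZR c * x0 - 9 * IZR c - IZR b) * (IZR a + IZR b * x0 + IZR c * x0 ^ 2))%R.
      - rewrite x0_root, H. ring.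
      - unfold u, v. repeat rewrite ?plus_IZR, ?minus_IZR, ?mult_IZR. ring. }
    destruct (Z.eq_dec v 0) as [Hv | Hv].
    + rewrite Hv in Huv. assert (Hu : u = 0) by (apply eq_IZR; lra).
      apply (cubic_form_neq0 (b + 9 * c) c Hc).
      replace (cubic_form (b + 9 * c) c) with (c * u + (b + 9 * c) * v)
        by (unfold cubic_form, u, v; ring).
      rewrite Hu, Hv. ring.
    + apply (x0_irrational (- u) v Hv). rewrite opp_IZR. lra.
Qed.

Definition Z3 : Type := (Z * Z * Z)%type.

(* [(u, v, w)] stands for the class of [u + v x + w x^2] in Z[x]/(p); [reduce l] is the class
   of the polynomial with coefficient list [l] (constant term first), by Horner's rule. *)
Definition horner_step (a : Z) (p : Z3) : Z3 :=
  let '(u, v, w) := p in (a + 6 * w, u - 18 * w, v + 9 * w).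

Fixpoint reduce (l : list Z) : Z3 :=
  match l with [] => (0, 0, 0) | a :: l' => horner_step a (reduce l') end.

Fixpoint horner (l : list Z) (x : R) : R :=
  match l with [] => 0%R | a :: l' => (IZR a + x * horner l' x)%R end.

Definition eval_x0 (p : Z3) : R :=
  let '(u, v, w) := p in (IZR u + IZR v * x0 + IZR w * x0 ^ 2)%R.

Lemma eval_x0_reduce (l : list Z) : eval_x0 (reduce l) = horner l x0.
Proof.
  induction l as [|a l IH]; cbn [reduce horner]; [cbn; ring|].
  rewrite <- IH. destruct (reduce l) as [[u v] w]; cbn [horner_step eval_x0].
  repeat rewrite ?plus_IZR, ?minus_IZR, ?mult_IZR.
  apply Rminus_diag_uniq.
  replace (_ - _)%R with (- IZR w * (x0 ^ 3 - 9 * x0 ^ 2 + 18 * x0 - 6))%R by ring.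
  rewrite x0_root. ring.
Qed.

Lemma reduce_eq0 (l : list Z) : horner l x0 = 0%R -> reduce l = (0, 0, 0).
Proof.
  rewrite <- eval_x0_reduce. destruct (reduce l) as [[u v] w]; cbn [eval_x0].
  intros H. destruct (x0_Z_independent u v w H) as [-> [-> ->]]. reflexivity.
Qed.

Lemma reduce_three (a b c : Z) : reduce [a; b; c] = (a, b, c).
Proof. cbn. f_equal; [f_equal|]; ring. Qed.

Definition Z3_divide (d : Z) (p : Z3) : Prop :=
  let '(u, v, w) := p in (d | u) /\ (d | v) /\ (d | w).

(* Multiplication by [x] is invertible modulo [d] because the constant term [-6] is. *)
Lemma Z3_divide_horner_step (d a : Z) (p : Z3) :
  Z.gcd d 6 = 1 -> (d | a) -> Z3_divide d (horner_step a p) -> Z3_divide d p.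
Proof.
  intros Hd Ha. destruct p as [[u v] w]; cbn [horner_step Z3_divide].
  intros [H0 [H1 H2]].
  assert (Hw : (d | w)).
  { apply (Z.gauss _ 6); [|exact Hd].
    replace (6 * w) with (a + 6 * w - a) by ring. apply Z.divide_sub_r; assumption. }
  split; [|split]; [| |exact Hw].
  - replace u with (u - 18 * w + 18 * w) by ring. apply Z.divide_add_r; [exact H1|].
    apply Z.divide_mul_r, Hw.
  - replace v with (v + 9 * w - 9 * w) by ring. apply Z.divide_sub_r; [exact H2|].
    apply Z.divide_mul_r, Hw.
Qed.

Lemma Z3_divide_reduce_app (d : Z) (l1 l2 : list Z) :
  Z.gcd d 6 = 1 -> List.Forall (Z.divide d) l1 ->
  Z3_divide d (reduce (l1 ++ l2)) -> Z3_divide d (reduce l2).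
Proof.
  intros Hd H1. induction H1 as [|a l1 Ha _ IH]; [auto|].
  intro H. apply IH, (Z3_divide_horner_step d a); assumption.
Qed.

Lemma root_x0_top_coef_divide (d : Z) (l : list Z) (a b c : Z) :
  Z.gcd d 6 = 1 -> List.Forall (Z.divide d) l -> horner (l ++ [a; b; c]) x0 = 0%R -> (d | c).
Proof.
  intros Hd Hl H. apply reduce_eq0 in H.
  assert (Habc : Z3_divide d (reduce [a; b; c])).
  { apply (Z3_divide_reduce_app d l); [exact Hd | exact Hl |].
    rewrite H. cbn. repeat split; apply Z.divide_0_r. }
  rewrite reduce_three in Habc. apply Habc.
Qed.

Fixpoint binom (n k : nat) : nat :=
  match n, k with
  | _, O => 1
  | O, S _ => 0
  | S n', S k' => binom n' k' + binom n' (S k')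
  end%nat.

Lemma binom_gt (n k : nat) : (n < k)%nat -> binom n k = 0%nat.
Proof.
  revert k; induction n as [|n IH]; intros [|k] Hk; cbn; try lia.
  rewrite !IH; lia.
Qed.

Lemma binom_diag (n : nat) : binom n n = 1%nat.
Proof. induction n as [|n IH]; cbn; [reflexivity|]. rewrite IH, binom_gt; lia. Qed.

Lemma C_binom (n k : nat) : (k <= n)%nat -> Binomial.C n k = INR (binom n k).
Proof.
  revert k; induction n as [|n IH]; intros k Hk.
  - replace k with 0%nat by lia. rewrite C_n_0. reflexivity.
  - destruct k as [|k]; [rewrite C_n_0; reflexivity|].
    destruct (Nat.eq_dec k n) as [-> | Hkn]; [rewrite C_n_n, binom_diag; reflexivity|].
    rewrite <- pascal by lia. cbn [binom]. rewrite plus_INR, !IH by lia. reflexivity.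
Qed.

Fixpoint rising (a k : nat) : nat :=
  match k with O => 1 | S k' => rising a k' * (a + k) end%nat.

Lemma fact_add_rising (a k : nat) : fact (a + k) = (fact a * rising a k)%nat.
Proof.
  induction k as [|k IH]; cbn [rising].
  - rewrite Nat.add_0_r; lia.
  - rewrite Nat.add_succ_r. cbn [fact]. rewrite IH. lia.
Qed.

Definition lag_coef (n m j : nat) : Z :=
  (-1) ^ Z.of_nat j * Z.of_nat (binom n j * rising (m + j) (n - j)).

Definition lag_coefs (n m : nat) : list Z := map (lag_coef n m) (seq 0 (S n)).

Lemma horner_app_single (l : list Z) (a : Z) (x : R) :
  horner (l ++ a :: nil) x = (horner l x + IZR a * x ^ length l)%R.
Proof. induction l as [|b l IH]; cbn [horner app length pow]; [ring|]. rewrite IH. ring. Qed.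

Lemma horner_map_seq (f : nat -> Z) (n : nat) (x : R) :
  horner (map f (seq 0 (S n))) x = sum_f_R0 (fun j => IZR (f j) * x ^ j)%R n.
Proof.
  induction n as [|n IH]; [cbn; ring|].
  rewrite seq_S, map_app; cbn [map plus].
  rewrite horner_app_single, IH, length_map, length_seq. reflexivity.
Qed.

Lemma laguerre_term_scaled (n m j : nat) (x : R) : (j <= n)%nat ->
  ((-1) ^ j * Binomial.C (n + m) (n - j) * x ^ j / INR (fact j) * INR (fact n)
   = IZR (lag_coef n m j) * x ^ j)%R.
Proof.
  intro Hj. unfold lag_coef.
  rewrite mult_IZR, <- pow_IZR, <- INR_IZR_INZ, mult_INR, <- C_binom by lia.
  unfold Binomial.C.
  replace (n + m - (n - j))%nat with (m + j)%nat by lia.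
  replace (n + m)%nat with (m + j + (n - j))%nat by lia.
  rewrite fact_add_rising, mult_INR.
  pose proof (INR_fact_neq_0 j). pose proof (INR_fact_neq_0 (n - j)).
  pose proof (INR_fact_neq_0 (m + j)).
  field. auto.
Qed.

Lemma laguerre_scaled (n m : nat) (x : R) :
  (INR (fact n) * laguerre n m x = horner (lag_coefs n m) x)%R.
Proof.
  unfold laguerre, lag_coefs. rewrite horner_map_seq, scal_sum.
  apply sum_eq. intros j Hj. apply laguerre_term_scaled, Hj.
Qed.

Lemma laguerre_x0_eq0_iff (n m : nat) :
  laguerre n m x0 = 0%R <-> reduce (lag_coefs n m) = (0, 0, 0).
Proof.
  pose proof (laguerre_scaled n m x0) as Hs. split.
  - intro H. apply reduce_eq0. rewrite <- Hs, H. ring.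
  - intro H. rewrite <- eval_x0_reduce, H in Hs. cbn in Hs.
    apply (Rmult_eq_reg_l (INR (fact n))); [lra | apply INR_fact_neq_0].
Qed.

Lemma lag_coef_diag (n m : nat) : lag_coef n m n = (-1) ^ Z.of_nat n.
Proof. unfold lag_coef. rewrite binom_diag, Nat.sub_diag. apply Z.mul_1_r. Qed.

Lemma lag_coef_divide (n m j : nat) : (j + 3 <= n)%nat ->
  ((Z.of_nat (m + n) - 2) * (Z.of_nat (m + n) - 1) * Z.of_nat (m + n) | lag_coef n m j).
Proof.
  intros Hj. set (N := Z.of_nat (m + n)). unfold lag_coef.
  set (t := (n - j - 3)%nat).
  replace (n - j)%nat with (S (S (S t))) by lia. cbn [rising]. rewrite !Nat2Z.inj_mul.
  replace (Z.of_nat (m + j + S (S (S t)))) with N by lia.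
  replace (Z.of_nat (m + j + S (S t))) with (N - 1) by lia.
  replace (Z.of_nat (m + j + S t)) with (N - 2) by lia.
  exists ((-1) ^ Z.of_nat j * Z.of_nat (binom n j) * Z.of_nat (rising (m + j) t)). ring.
Qed.

Lemma not_divide_sign (d k : Z) : 1 < d -> 0 <= k -> ~ (d | (-1) ^ k).
Proof.
  intros Hd Hk H. apply Z.divide_abs_r in H.
  rewrite Z.abs_pow, Z.pow_1_l in H by exact Hk.
  apply Z.divide_pos_le in H; lia.
Qed.

Lemma gcd_6_of_mod (d : Z) : d mod 6 = 1 \/ d mod 6 = 5 -> Z.gcd d 6 = 1.
Proof.
  intro H. rewrite Z.gcd_comm, <- Z.gcd_mod by lia.
  destruct H as [-> | ->]; reflexivity.
Qed.

(* One of N-2, N-1, N is = +-1 mod 6 unless N = 4 mod 6; then (N-2)/2 or N/2 is. *)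
Lemma three_consecutive_coprime_6_divisor (N : Z) : 5 <= N ->
  exists d, 1 < d /\ Z.gcd d 6 = 1 /\ (d | (N - 2) * (N - 1) * N).
Proof.
  intro HN.
  assert (Hd : exists d, 1 < d /\ (d mod 6 = 1 \/ d mod 6 = 5) /\
            (N - 2 = d \/ N - 1 = d \/ N = d \/ N - 2 = 2 * d \/ N = 2 * d)).
  { assert (HNk := Z.div_mod N 12 ltac:(lia)).
    destruct (Z.mod_pos_bound N 12 ltac:(lia)).
    set (k := N / 12) in *.
    assert (Hr : N mod 12 = 0 \/ N mod 12 = 1 \/ N mod 12 = 2 \/ N mod 12 = 3 \/
              N mod 12 = 4 \/ N mod 12 = 5 \/ N mod 12 = 6 \/ N mod 12 = 7 \/
              N mod 12 = 8 \/ N mod 12 = 9 \/ N mod 12 = 10 \/ N mod 12 = 11) by lia.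
    destruct Hr as [Hr|[Hr|[Hr|[Hr|[Hr|[Hr|[Hr|[Hr|[Hr|[Hr|[Hr|Hr]]]]]]]]]]];
      rewrite Hr in HNk;
      [ exists (N - 1) | exists N | exists (N - 1) | exists (N - 2) | exists (6 * k + 1) | exists N
      | exists (N - 1) | exists N | exists (N - 1) | exists (N - 2) | exists (6 * k + 5)
      | exists N ];
      Z.to_euclidean_division_equations; lia. }
  destruct Hd as [d [Hd1 [Hd6 Hdiv]]].
  exists d. split; [exact Hd1 | split; [apply gcd_6_of_mod, Hd6 |]].
  destruct Hdiv as [E | [E | [E | [E | E]]]]; rewrite E;
    [ apply Z.divide_mul_l, Z.divide_mul_l | apply Z.divide_mul_l, Z.divide_mul_r
    | apply Z.divide_mul_r | apply Z.divide_mul_l, Z.divide_mul_l | apply Z.divide_mul_r ];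
    first [apply Z.divide_refl | apply Z.divide_factor_r].
Qed.

Lemma laguerre_x0_neq0_low_degree (n m : nat) :
  (n <= 2)%nat -> laguerre n m x0 <> 0%R.
Proof.
  intros Hn H. apply laguerre_x0_eq0_iff in H.
  assert (Htop : lag_coef n m n = 0).
  { unfold lag_coefs in H.
    destruct n as [|[|[|n]]]; [| | |lia]; cbn [seq map reduce horner_step] in H;
      injection H; lia. }
  rewrite lag_coef_diag in Htop. revert Htop. apply Z.pow_nonzero; lia.
Qed.

Lemma laguerre_x0_neq0_high_degree (n m : nat) :
  (3 <= n)%nat -> (5 <= m + n)%nat -> laguerre n m x0 <> 0%R.
Proof.
  intros Hn HN H.
  destruct (three_consecutive_coprime_6_divisor (Z.of_nat (m + n)) ltac:(lia))
    as [d [Hd1 [Hd6 Hdiv]]].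
  apply (not_divide_sign d (Z.of_nat n) Hd1 (Nat2Z.is_nonneg n)). rewrite <- (lag_coef_diag n m).
  set (low := map (lag_coef n m) (seq 0 (n - 2))).
  assert (Hsplit : lag_coefs n m
                   = low ++ [lag_coef n m (n - 2); lag_coef n m (n - 1); lag_coef n m n]).
  { unfold lag_coefs, low. replace (S n) with (n - 2 + 3)%nat by lia.
    rewrite seq_app, map_app. cbn. do 3 f_equal; [|f_equal; f_equal]; f_equal; lia. }
  apply (root_x0_top_coef_divide d low (lag_coef n m (n - 2)) (lag_coef n m (n - 1)) _ Hd6).
  - apply Forall_map, Forall_forall. intros j Hj%in_seq.
    eapply Z.divide_trans; [exact Hdiv | apply lag_coef_divide; lia].
  - rewrite <- Hsplit, <- laguerre_scaled, H. ring.
Qed.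

Close Scope Z_scope.

Theorem proposition4 (n m : nat) :
  laguerre n m x0 = 0 <-> (n = 3%nat /\ m = 0%nat).
Proof.
  split.
  - intro H. destruct (Nat.le_gt_cases n 2) as [Hn | Hn].
    { exfalso. exact (laguerre_x0_neq0_low_degree n m Hn H). }
    destruct (Nat.le_gt_cases 5 (m + n)) as [HN | HN].
    { exfalso. exact (laguerre_x0_neq0_high_degree n m Hn HN H). }
    apply laguerre_x0_eq0_iff in H.
    assert (Hnm : ((n = 3 /\ m = 0) \/ (n = 3 /\ m = 1) \/ (n = 4 /\ m = 0))%nat) by lia.
    destruct Hnm as [Hnm | [[-> ->] | [-> ->]]]; [exact Hnm | (vm_compute in H; discriminate) ..].
  - intros [-> ->]. apply laguerre_x0_eq0_iff. vm_compute. reflexivity.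
Qed.
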